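(* Let $X$ be a positive random variable with finite mean $\mu$, which is either discrete with probability mass function $f_X$ or absolutely continuous with density $f_X$. Suppose there exist positive constants $c$ and $t_0$ such that $$\frac{x}{\mu}f_X(x)\le f_X(x-c)\qquad\text{for all } x\ge t_0.$$ Then, if $X^s$ has the size bias distribution of $X$, $$\mathbb{P}(X^s\ge t)\le \mathbb{P}(X+c\ge t)\qquad\text{for all } t\ge t_0.$$
   Context: Size bias transform: for a positive random variable $X$ with finite mean $\mu$, $X^s$ has the size bias distribution of $X$ if $\mathbb{E}[Xf(X)]=\mu\mathbb{E}[f(X^s)]$ for all $f$ with $\mathbb{E}[Xf(X)]<\infty$; when $X$ has density or mass function $f_X$, $X^s$ has density or mass function $x f_X(x)/\mu$. *)

From mathcomp Require Import all_boot all_order all_algebra.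
From mathcomp Require Import all_classical all_reals all_analysis.
Set Implicit Arguments. Unset Strict Implicit. Unset Printing Implicit Defensive.
Import Order.TTheory GRing.Theory Num.Theory.
Local Open Scope classical_set_scope.
Local Open Scope ring_scope.

Definition meanRV d (T : measurableType d) (R : realType)
  (P : probability T R) (X : T -> R) : R :=
  fine (\int[P]_w (X w)%:E)%E.

Definition size_bias d d' (T : measurableType d) (T' : measurableType d')
  (R : realType) (P : probability T R) (X : T -> R)
  (Q : probability T' R) (Xs : T' -> R) : Prop :=
  forall f : R -> R, measurable_fun setT f ->
    P.-integrable setT (fun w => (X w * f (X w))%:E) ->
    (\int[P]_w (X w * f (X w))%:E
       = (meanRV P X)%:E * \int[Q]_w (f (Xs w))%:E)%E.

Definition has_density d (T : measurableType d) (R : realType)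
  (P : probability T R) (X : T -> R) (fX : R -> R) : Prop :=
  (forall x, 0 <= fX x) /\ measurable_fun setT fX /\
  forall A : set R, measurable A ->
    P (X @^-1` A) = (\int[lebesgue_measure]_(x in A) (fX x)%:E)%E.

Definition is_discrete d (T : measurableType d) (R : realType)
  (P : probability T R) (X : T -> R) : Prop :=
  exists S : set R, countable S /\ P (X @^-1` S) = 1%E.

Definition pmass d (T : measurableType d) (R : realType)
  (P : probability T R) (X : T -> R) (x : R) : R :=
  fine (P (X @^-1` [set x])).

(* Taking f = 1_[t, +oo[ in the size-bias identity gives
   mu P(X^s >= t) = E[X; X >= t], so it suffices to show
   E[X; X \in A] <= mu P(X + c \in A) for every measurable A in [t0, +oo[.
   Pointwise this is the hypothesis x f(x) <= mu f(x - c). In the continuous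
   case it is integrated over A against Lebesgue measure, whose translation
   invariance turns the right-hand side into mu P(X + c \in A); in the
   discrete case it is summed over the countably many atoms of X in A. *)

From HB Require Import structures.
From mathcomp Require Import all_boot all_order all_algebra.
From mathcomp Require Import all_classical all_reals all_analysis.
From mathcomp Require Import measurable_realfun.
Import Order.TTheory GRing.Theory Num.Theory.
Local Open Scope classical_set_scope.
Local Open Scope ring_scope.
Set Implicit Arguments.
Unset Strict Implicit.

Lemma ler_divM_swap (R : realFieldType) (m x a b : R) :
  0 < m -> (x / m * a <= b) = (x * a <= m * b).
Proof. by move=> m_gt0; rewrite mulrAC ler_pdivrMr // mulrC [b * m]mulrC. Qed.

Lemma measurable_preimage d d' (T : measurableType d) (U : measurableType d')
    (f : T -> U) (A : set U) :
  measurable_fun setT f -> measurable A -> measurable (f @^-1` A).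
Proof. by move=> mf mA; rewrite -[f @^-1` A]setTI; exact: mf. Qed.

Lemma trivIset_preimage I T U (D : set I) (F : I -> set U) (f : T -> U) :
  trivIset D F -> trivIset D (fun i => f @^-1` F i).
Proof.
by move=> tF i j Di Dj [w [Fi Fj]]; apply: tF => //; exists (f w).
Qed.

Lemma countable_partition_set1 T (S : set T) : countable S ->
  exists F : (set T)^nat, [/\ trivIset setT F,
    forall n, F n = set0 \/ (exists x, F n = [set x]) & \bigcup_n F n = S].
Proof.
move=> /countable_injP[g ginj].
exists (fun n => S `&` g @^-1` [set n]); split.
- apply/trivIsetP => i j _ _ ij; apply/seteqP; split => // x [[_ gi] [_ gj]].
  by move: ij; rewrite -gi -gj eqxx.
- move=> n; have [[x [Sx gx]]|Fn0] := pselect (exists x, (S `&` g @^-1` [set n]) x).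
    right; exists x; apply/seteqP; split => [y [Sy gy]|y ->] //=.
    by apply: ginj; rewrite ?inE // gx gy.
  by left; apply/seteqP; split => // x Fx; apply: Fn0; exists x.
- by apply/seteqP; split => [x [n _ []]|x Sx] //; exists (g x).
Qed.

Section integral_gt0.
Local Open Scope ereal_scope.
Context d (T : measurableType d) (R : realType) (mu : {measure set T -> \bar R}).

Lemma integral_gt0 (f : T -> R) : measurable_fun setT f ->
  (forall x, 0 < f x)%R -> 0 < mu setT -> 0 < \int[mu]_x (f x)%:E.
Proof.
move=> mf f_gt0 muT_gt0.
rewrite lt0e integral_ge0 ?andbT; last by move=> x _; rewrite lee_fin ltW.
apply/negP => /eqP int0.
have mEf : measurable_fun setT (EFin \o f) by exact/measurable_EFinP.
have /(ae_eq_integral_abs _ measurableT mEf) [N [mN muN0 fN]] :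
    \int[mu]_x `|(f x)%:E| = 0.
  by rewrite -int0; apply: eq_integral => x _; rewrite gee0_abs // lee_fin ltW.
suff : mu setT <= mu N by rewrite muN0 leNgt muT_gt0.
apply: le_measure; rewrite ?inE //.
by move=> x _; apply: fN => /(_ I) [] /eqP; rewrite gt_eqF.
Qed.

End integral_gt0.

Section ge0_integral_bigcup_le.
Local Open Scope ereal_scope.
Context d (T : measurableType d) (R : realType) (mu : {measure set T -> \bar R}).

Lemma ge0_integral_bigcup_le (F G : (set T)^nat) (h : T -> \bar R) (a : R) :
  (forall n, measurable (F n)) -> (forall n, measurable (G n)) ->
  trivIset setT F -> trivIset setT G ->
  measurable_fun (\bigcup_n F n) h -> (forall x, 0 <= h x) -> (0 <= a)%R ->
  (forall n, \int[mu]_(x in F n) h x <= a%:E * mu (G n)) ->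
  \int[mu]_(x in \bigcup_n F n) h x <= a%:E * mu (\bigcup_n G n).
Proof.
move=> mF mG tF tG mh h0 a0 hFG.
rewrite ge0_integral_bigcup // measure_bigcup //= -nneseriesZl //.
rewrite [leRHS](@eq_eseriesl _ _ (fun=> true)); last by move=> n; rewrite in_setT.
by apply: lee_nneseries => [n _ _|n _]; [exact: integral_ge0 | exact: hFG].
Qed.

End ge0_integral_bigcup_le.

Section lebesgue_measure_translate.
Context (R : realType).
Local Notation lambda := (@lebesgue_measure R).

(* Typed on measurableTypeR R so that pushing Lebesgue measure forward along
   it yields a measure on the space of lebesgue_measure_unique. *)
Definition translate (a : R) (x : measurableTypeR R) : measurableTypeR R := x + a.

Lemma measurable_translate (a : R) : measurable_fun setT (translate a).
Proof. exact: measurable_funD. Qed.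

HB.instance Definition _ (a : R) :=
  isMeasurableFun.Build _ _ _ _ (translate a) (measurable_translate a).

Lemma lebesgue_measure_translate (a : R) (A : set R) : measurable A ->
  lambda (translate a @^-1` A) = lambda A.
Proof.
move=> mA; change (pushforward lambda (translate a) A = lambda A).
apply/esym/lebesgue_measure_unique => // _ [[l r]] _ <- /=.
transitivity (lambda (translate a @^-1` `]l, r]%classic)) => //.
have -> : translate a @^-1` `]l, r]%classic = `]l - a, r - a]%classic.
  by apply/seteqP; split => x /=; rewrite !in_itv /= ltrBlDr lerBrDr.
rewrite !lebesgue_measure_itv /= !lte_fin ltrD2r -!EFinD.
by rewrite opprD addrACA subrr addr0.
Qed.

Lemma ge0_lebesgue_integral_translate (a : R) (f : R -> \bar R) (E : set R) :
  measurable E -> measurable_fun E f -> (forall x, E x -> 0 <= f x)%E ->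
  (\int[lambda]_(x in translate a @^-1` E) f (x + a)%R = \int[lambda]_(x in E) f x)%E.
Proof.
move=> mE mf f0.
rewrite -(ge0_integral_pushforward (measurable_translate a)) //; last first.
  by move=> x /set_mem; exact: f0.
by apply: eq_measure_integral => A mA _; exact: lebesgue_measure_translate.
Qed.

End lebesgue_measure_translate.

Section integral_density.
Local Open Scope ereal_scope.
Context d (T : measurableType d) (R : realType).
Variables (nu : {finite_measure set T -> \bar R})
  (mu : {sigma_finite_measure set T -> \bar R}) (g : T -> R).
Hypotheses (mg : measurable_fun setT g)
  (nuE : forall A, measurable A -> nu A = \int[mu]_(x in A) (g x)%:E).

Lemma density_dominates : nu `<< mu.
Proof.
apply/null_content_dominatesP => A mA muA0; rewrite nuE //.
by apply: null_set_integral => //; apply/measurable_EFinP; exact: measurable_funTS.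
Qed.

Local Notation RN := (Radon_Nikodym_SigmaFinite.f nu mu).

Lemma ae_eq_Radon_Nikodym_density (E : set T) : measurable E ->
  ae_eq mu E RN (EFin \o g).
Proof.
move=> mE; apply: integral_ae_eq => //.
- apply: (integrableS measurableT) => //.
  exact: Radon_Nikodym_SigmaFinite.f_integrable density_dominates.
- by apply/measurable_EFinP; exact: measurable_funTS.
- move=> A _ mA.
  by rewrite -Radon_Nikodym_SigmaFinite.f_integral ?nuE //; exact: density_dominates.
Qed.

Lemma ge0_integral_density (f : T -> \bar R) (E : set T) : measurable E ->
  measurable_fun E f -> (forall x, E x -> 0 <= f x) ->
  \int[nu]_(x in E) f x = \int[mu]_(x in E) (f x * (g x)%:E).
Proof.
move=> mE mf f0.
have fE x : x \in E -> (f \_ E) x = f x by move=> xE; rewrite patchE xE.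
have mfE : measurable_fun E (f \_ E).
  by apply/(measurable_restrict _ mE mE); rewrite setIid.
rewrite -[LHS](eq_integral _ _ fE).
rewrite -(Radon_Nikodym_SigmaFinite.change_of_variables density_dominates) //; last first.
  by move=> x; rewrite patchE; case: ifPn => // /set_mem; exact: f0.
have mRN : measurable_fun E RN.
  apply: measurable_funTS; apply: measurable_int.
  exact: Radon_Nikodym_SigmaFinite.f_integrable density_dominates.
have RN_g : ae_eq mu E (fun x => (f \_ E) x * RN x) (fun x => (f \_ E) x * (g x)%:E).
  exact/ae_eqe_mul2l/ae_eq_Radon_Nikodym_density.
rewrite (ae_eq_integral _ _ _ _ _ RN_g) //.
- by apply: eq_integral => x xE; rewrite fE.
- exact: emeasurable_funM.
- apply: emeasurable_funM => //.
  by apply/measurable_EFinP; exact: measurable_funTS.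
Qed.

End integral_density.

Section random_variable.
Local Open Scope ereal_scope.
Context d (T : measurableType d) (R : realType) (P : probability T R) (X : T -> R).
Hypothesis mX : measurable_fun setT X.

Lemma meanRV_EFin : P.-integrable setT (EFin \o X) ->
  \int[P]_w (X w)%:E = (meanRV P X)%:E.
Proof. by move=> iX; rewrite /meanRV fineK // integrable_fin_num. Qed.

Lemma pmassE (x : R) : P (X @^-1` [set x]) = (pmass P X x)%:E.
Proof. by rewrite /pmass fineK // fin_num_measure //; exact: measurable_preimage. Qed.

Lemma integral_preimage_set1 (x : R) :
  \int[P]_(w in X @^-1` [set x]) (X w)%:E = (x * pmass P X x)%:E.
Proof.
rewrite (eq_integral (cst x%:E)); last by move=> w /set_mem ->.
by rewrite integral_cst ?EFinM; [congr (_ * _); exact: pmassE | exact: measurable_preimage].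
Qed.

Lemma integral_preimage_indic (A : set R) : measurable A ->
  \int[P]_(w in X @^-1` A) (X w)%:E = \int[P]_w (X w * \1_A (X w))%:E.
Proof.
move=> mA; rewrite integral_mkcond; apply: eq_integral => w _.
rewrite patchE indicE; case: ifPn => [/set_mem XwA|XwA].
  by rewrite mem_set ?mulr1.
by rewrite memNset ?mulr0 // => /(@mem_set _ (X @^-1` A)); rewrite (negbTE XwA).
Qed.

Lemma meanRV_gt0 : P.-integrable setT (EFin \o X) -> (forall w, 0 < X w)%R ->
  (0 < meanRV P X)%R.
Proof.
move=> iX X_gt0; rewrite -lte_fin -meanRV_EFin //.
apply: integral_gt0 => //.
by rewrite /= probability_setT.
Qed.

Lemma size_bias_preimage d' (T' : measurableType d') (Q : probability T' R)
    (Xs : T' -> R) (A : set R) :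
  measurable_fun setT Xs -> P.-integrable setT (EFin \o X) ->
  size_bias P X Q Xs -> measurable A ->
  \int[P]_(w in X @^-1` A) (X w)%:E = (meanRV P X)%:E * Q (Xs @^-1` A).
Proof.
move=> mXs iX sb mA; rewrite integral_preimage_indic // sb //; last first.
  apply: le_integrable iX => //.
    by apply/measurable_EFinP; apply: measurable_funM => //; exact: measurableT_comp.
  move=> w _ /=; rewrite lee_fin normrM indicE.
  by case: (X w \in A); rewrite ?normr1 ?normr0 ?mulr1 ?mulr0.
congr (_ * _); rewrite -[Xs @^-1` A]setIT -integral_indic //.
by rewrite -[Xs @^-1` A]setTI; exact: mXs.
Qed.

Lemma ge0_integral_preimage_density (fX : R -> R) (h : R -> \bar R) (E : set R) :
  has_density P X fX -> measurable E -> measurable_fun E h ->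
  (forall x, E x -> 0 <= h x) ->
  \int[P]_(w in X @^-1` E) h (X w) =
  \int[lebesgue_measure]_(x in E) (h x * (fX x)%:E).
Proof.
move=> [_ [mfX PXE]] mE mh h_ge0.
pose Xm : {mfun T >-> measurableTypeR R} :=
  HB.pack (X : T -> measurableTypeR R)
    (isMeasurableFun.Build _ _ _ (measurableTypeR R) X mX).
rewrite -(@ge0_integral_pushforward _ _ _ (measurableTypeR R) _ X mX) //; last first.
  by move=> x /set_mem; exact: h_ge0.
exact: (@ge0_integral_density _ _ _ (distribution P Xm) lebesgue_measure fX).
Qed.

Lemma integral_preimage_support (A S : set R) : (forall w, 0 <= X w)%R ->
  measurable A -> measurable S -> P (X @^-1` S) = 1 ->
  \int[P]_(w in X @^-1` A) (X w)%:E = \int[P]_(w in X @^-1` (A `&` S)) (X w)%:E.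
Proof.
move=> X_ge0 mA mS PS1.
have PnS : P (X @^-1` ~` S) = 0.
  by rewrite -preimage_setC probability_setC ?PS1 ?subee //; exact: measurable_preimage.
rewrite (ge0_negligible_integral _ _ _ _ PnS) //; last 4 first.
- by apply: measurable_preimage => //; exact: measurableC.
- exact: measurable_preimage.
- exact/measurable_EFinP/measurable_funTS.
- by move=> w _; rewrite lee_fin.
by rewrite setDE preimage_setC setCK -preimage_setI.
Qed.

End random_variable.

Section discrete_case.
Local Open Scope ereal_scope.
Context d (T : measurableType d) (R : realType) (P : probability T R) (X : T -> R).
Variables (c t0 : R).
Hypotheses (mX : measurable_fun setT X) (X_ge0 : forall w, (0 <= X w)%R)
  (mean_gt0 : (0 < meanRV P X)%R)
  (pmass_shift : forall x, (t0 <= x ->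
     x / meanRV P X * pmass P X x <= pmass P X (x - c))%R).

Lemma integral_preimage_set1_le (x : R) : (t0 <= x)%R ->
  \int[P]_(w in X @^-1` [set x]) (X w)%:E <=
  (meanRV P X)%:E * P ((fun w => X w + c)%R @^-1` [set x]).
Proof.
move=> t0x; rewrite integral_preimage_set1 //.
have -> : (fun w => X w + c)%R @^-1` [set x] = X @^-1` [set (x - c)%R].
  by apply/seteqP; split => w /= => [<-|->]; rewrite ?addrK ?subrK.
by rewrite pmassE // -EFinM lee_fin -ler_divM_swap // pmass_shift.
Qed.

Lemma discrete_integral_preimage_le (A : set R) : is_discrete P X ->
  measurable A -> A `<=` `[t0, +oo[ ->
  \int[P]_(w in X @^-1` A) (X w)%:E <=
  (meanRV P X)%:E * P ((fun w => X w + c)%R @^-1` A).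
Proof.
move=> [S [cS PS1]] mA At0.
have mS : measurable S by apply: countable_measurable => //; exact: measurable_set1.
rewrite (integral_preimage_support mX X_ge0 mA mS PS1).
have [F [tF F01 FE]] :=
  countable_partition_set1 (sub_countable (subset_card_le (@subIsetr _ A S)) cS).
have mF n : measurable (F n).
  by case: (F01 n) => [->|[x ->]]; [exact: measurable0 | exact: measurable_set1].
have FA n : F n `<=` A by move=> x Fx; have [] : (A `&` S) x by rewrite -FE; exists n.
have mXc : measurable_fun setT (fun w => X w + c)%R by exact: measurable_funD.
rewrite -FE preimage_bigcup.
apply: (@le_trans _ _ ((meanRV P X)%:E * P (\bigcup_n (fun w => X w + c)%R @^-1` F n))).
  apply: ge0_integral_bigcup_le.
  - by move=> n; exact: measurable_preimage.
  - by move=> n; exact: measurable_preimage.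
  - exact: trivIset_preimage.
  - exact: trivIset_preimage.
  - exact/measurable_EFinP/measurable_funTS.
  - by move=> w; rewrite lee_fin.
  - exact: ltW.
  move=> n; case: (F01 n) => [->|[x Fnx]].
    by rewrite !preimage_set0 integral_set0 measure0 mule0.
  have /At0 : A x by apply: (FA n); rewrite Fnx.
  by rewrite /= in_itv /= andbT Fnx; exact: integral_preimage_set1_le.
apply: lee_wpmul2l; first by rewrite lee_fin ltW.
apply: le_measure; rewrite ?inE.
- by apply: bigcup_measurable => n _; exact: measurable_preimage.
- exact: measurable_preimage.
- by move=> w [n _]; exact: FA.
Qed.

End discrete_case.

Section continuous_case.
Local Open Scope ereal_scope.
Context d (T : measurableType d) (R : realType) (P : probability T R) (X : T -> R).
Variables (c t0 : R) (fX : R -> R).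
Hypotheses (mX : measurable_fun setT X) (t0_ge0 : (0 <= t0)%R)
  (mean_gt0 : (0 < meanRV P X)%R) (X_density : has_density P X fX)
  (density_shift : forall x, (t0 <= x ->
     x / meanRV P X * fX x <= fX (x - c))%R).

Lemma density_integral_preimage_le (A : set R) :
  measurable A -> A `<=` `[t0, +oo[ ->
  \int[P]_(w in X @^-1` A) (X w)%:E <=
  (meanRV P X)%:E * P ((fun w => X w + c)%R @^-1` A).
Proof.
move=> mA At0.
have A_ge0 x : A x -> (0 <= x)%R.
  by move=> /At0; rewrite /= in_itv /= andbT; exact: le_trans.
have [fX_ge0 [mfX PXE]] := X_density.
have mAc : measurable (translate c @^-1` A).
  by apply: measurable_preimage => //; exact: measurable_translate.
rewrite (ge0_integral_preimage_density (h := EFin) mX X_density mA); last 2 first.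
- exact/measurable_EFinP/measurable_funTS.
- by move=> x /A_ge0; rewrite lee_fin.
have -> : (fun w => X w + c)%R @^-1` A = X @^-1` (translate c @^-1` A) by [].
rewrite PXE // -(@ge0_lebesgue_integral_translate _ (- c) (EFin \o fX)) //; last 2 first.
- exact/measurable_EFinP/measurable_funTS.
- by move=> x _; rewrite lee_fin.
have -> : translate (- c) @^-1` (translate c @^-1` A) = A.
  by apply/seteqP; split => x /=; rewrite /translate subrK.
have mfXc : measurable_fun A (fun x => (EFin \o fX) (x - c)%R).
  by apply/measurable_EFinP/measurable_funTS/measurableT_comp => //; exact: measurable_funD.
rewrite -ge0_integralZl //; last 2 first.
- by move=> x _; rewrite lee_fin.
- by rewrite lee_fin ltW.
apply: ge0_le_integral => //.
- by move=> x /A_ge0 x_ge0; rewrite lee_fin mulr_ge0.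
- apply/measurable_EFinP; apply: measurable_funM => //; exact: measurable_funTS.
- exact: emeasurable_funM.
move=> x /At0; rewrite /= in_itv /= andbT => t0x.
by rewrite -EFinM lee_fin -ler_divM_swap // density_shift.
Qed.

End continuous_case.

Unset Implicit Arguments.

Theorem theorem3p1 (R : realType)
  (d : measure_display) (T : measurableType d) (P : probability T R)
  (d' : measure_display) (T' : measurableType d') (Q : probability T' R)
  (X : T -> R) (Xs : T' -> R) (c t0 : R) :
  measurable_fun setT X -> measurable_fun setT Xs ->
  (forall w, 0 < X w) ->
  P.-integrable setT (fun w => (X w)%:E) ->
  0 < c -> 0 < t0 ->
  ((is_discrete P X /\
     forall x, t0 <= x -> x / meanRV P X * pmass P X x <= pmass P X (x - c))
   \/
   (exists fX : R -> R, has_density P X fX /\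
     forall x, t0 <= x -> x / meanRV P X * fX x <= fX (x - c))) ->
  size_bias P X Q Xs ->
  forall t, t0 <= t ->
    (Q [set w | (t <= Xs w)%R] <= P [set w | (t <= X w + c)%R])%E.
Proof.
move=> mX mXs X_gt0 iX _ t0_gt0 shift_hyp sb t t0t.
have mean_gt0 := meanRV_gt0 mX iX X_gt0.
have mA : measurable `[t, +oo[%classic by exact: measurable_itv.
have At0 : `[t, +oo[ `<=` `[t0, +oo[.
  by move=> x; rewrite /= !in_itv /= !andbT; exact: le_trans.
rewrite -(preimage_itvcy Xs) -(preimage_itvcy (fun w => X w + c)).
rewrite -(@lee_pmul2l _ (meanRV P X)%:E) ?lte_fin // -size_bias_preimage //.
case: shift_hyp => [[X_discrete pmass_shift]|[fX [X_density density_shift]]].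
- exact: (discrete_integral_preimage_le mX (fun w => ltW (X_gt0 w)) mean_gt0
    pmass_shift X_discrete mA At0).
- exact: (density_integral_preimage_le mX (ltW t0_gt0) mean_gt0 X_density
    density_shift mA At0).
Qed.
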